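(* Let $X$ be a locally compact Hausdorff space and $(Y,\Delta)$ an $X$-simplicial complex satisfying hypotheses $(H_1)$ and $(H_2)$. Then every element of $\mathcal S=\bigcup_{\mu\in|\Delta|}S(\mu)$ is relatively compact in $|\Delta|$. Moreover, $|\Delta|$ is locally compact.
   Context: An $X$-simplicial complex is a pair $(Y,\Delta)$ with $Y$ locally compact Hausdorff, $\rho:Y\to X$ a local homeomorphism, and $\Delta$ a family of finite nonempty subsets of $Y$ of bounded cardinality, each contained in a fibre $\rho^{-1}(x)$, closed under taking nonempty subsets. $P(Y)$ is the space of positive Radon measures of total mass $1$ supported in a single fibre of $\rho$, with the weak-$*$ topology from $C_c(Y,\mathbb R)$, and $|\Delta|=\{\mu\in P(Y):\mathrm{supp}(\mu)\in\Delta\}$ with the subspace topology. $(H_1)$: for every compact $K\subseteq Y$, $C_K=\{y\in Y:\exists y'\in K,\{y,y'\}\in\Delta\}$ is compact. $(H_2)$: if nets $(y^{(i)}_\lambda)_\lambda$, $0\le i\le k$, converge to $y^{(i)}$ and $\{y^{(0)}_\lambda,\dots,y^{(k)}_\lambda\}\in\Delta$ for all $\lambda$, then $\{y^{(0)},\dots,y^{(k)}\}\in\Delta$. For $\mu=\sum_{i=0}^mc_i\delta_{y_i}\in|\Delta|$ with $c_i>0$, $S(\mu)$ is the set of all sets $W(\mu,(f_i)_i,\epsilon)=\{\nu\in|\Delta|:|\nu(f_i)-\mu(f_i)|<\epsilon\ \forall i\}$ where $f_0,\dots,f_m\in C_c(Y,[0,1])$ and $\epsilon>0$ satisfy: each $f_i$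 is supported in a relatively compact open neighbourhood $V_i$ of $y_i$ on which $\rho$ restricts to a homeomorphism onto an open subset of $X$, $f_i(y_i)>0$, and $0<\epsilon<\min_i c_if_i(y_i)$. *)

From HB Require Import structures.
From mathcomp Require Import all_boot all_order all_algebra.
From mathcomp Require Import all_classical all_reals all_analysis.
Set Implicit Arguments. Unset Strict Implicit. Unset Printing Implicit Defensive.
Import Order.TTheory GRing.Theory Num.Theory.
Local Open Scope classical_set_scope.
Local Open Scope ring_scope.

Section XSimplicial.
Context {R : realType}.

(** ρ restricted to V is a homeomorphism onto an open subset of X:
    V open, ρ continuous and injective on V, and ρ maps open subsets of V
    to open subsets of X (in particular ρ(V) is open). *)
Definition homeo_chart {Y X : topologicalType} (rho : Y -> X) (V : set Y) :=
  [/\ open V, {within V, continuous rho},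
      (forall a b, V a -> V b -> rho a = rho b -> a = b) &
      (forall W, open W -> W `<=` V -> open (rho @` W))].

Definition local_homeomorphism {Y X : topologicalType} (rho : Y -> X) :=
  forall y : Y, exists2 U : set Y, U y & homeo_chart rho U.

Definition X_simplicial_complex {Y X : topologicalType} (rho : Y -> X)
    (Delta : set (set Y)) :=
  [/\ (forall s, Delta s -> finite_set s /\ s !=set0),
      (exists N : nat, forall s, Delta s -> card_le s `I_N),
      (forall s, Delta s -> exists x : X, s `<=` rho @^-1` [set x]) &
      (forall s t, Delta s -> t `<=` s -> t !=set0 -> Delta t)].

Definition hyp_H1 {Y : topologicalType} (Delta : set (set Y)) :=
  forall K : set Y, compact K ->
    compact [set y | exists2 y', K y' & Delta ([set y] `|` [set y'])].

Definition directed_set (L : Type) (le : L -> L -> Prop) :=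
  [/\ inhabited L, (forall a, le a a), (forall a b c, le a b -> le b c -> le a c)
    & (forall a b, exists c, le a c /\ le b c)].

Definition net_converges {Y : topologicalType} (L : Type) (le : L -> L -> Prop)
    (x : L -> Y) (y : Y) :=
  forall U : set Y, nbhs y U -> exists l0, forall l, le l0 l -> U (x l).

Definition hyp_H2 {Y : topologicalType} (Delta : set (set Y)) :=
  forall (L : Type) (le : L -> L -> Prop) (k : nat)
         (ys : 'I_k.+1 -> L -> Y) (lim : 'I_k.+1 -> Y),
    directed_set le ->
    (forall i, net_converges le (ys i) (lim i)) ->
    (forall l, Delta (range (fun i => ys i l))) ->
    Delta (range lim).

Definition supp {Y : choiceType} (m : Y -> R) : set Y := [set y | m y != 0].

(** Finitely supported probability measures whose support lies in Δ,
    represented by their weights: μ = Σ_{y ∈ supp μ} μ(y) δ_y. *)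
Definition is_simplex_pt {Y : choiceType} (Delta : set (set Y)) (m : Y -> R) :=
  [/\ Delta (supp m), (forall y, 0 <= m y) & \sum_(y \in supp m) m y = 1].

Definition pairing {Y : choiceType} (m : Y -> R) (f : Y -> R) : R :=
  \sum_(y \in supp m) m y * f y.

Definition Cc_set (Y : topologicalType) : set (Y -> R) :=
  fun f : Y -> R => continuous (f : Y -> R^o) /\ compact (closure (supp f)).
Definition Cc (Y : topologicalType) := set_type (@Cc_set Y).

Definition simplex_pts {Y : topologicalType} (Delta : set (set Y)) :=
  set_type (is_simplex_pt Delta).

Definition eval_map {Y : topologicalType} (Delta : set (set Y))
    (mu : simplex_pts Delta) : {ptws Cc Y -> R^o} :=
  fun f => pairing (val mu) (val f).

(** |Δ| with the (subspace of the) weak-* topology *)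
Definition realization {Y : topologicalType} (Delta : set (set Y)) :=
  initial_topology (@eval_map Y Delta).

Definition rl_weights {Y : topologicalType} {Delta : set (set Y)}
   (mu : realization Delta) : Y -> R := val (mu : simplex_pts Delta).

Definition S_nbhd {Y X : topologicalType} (rho : Y -> X) (Delta : set (set Y))
    (mu : realization Delta) (W : set (realization Delta)) :=
  exists (f : Y -> Y -> R) (V : Y -> set Y) (eps : R),
  [/\ (forall y, supp (rl_weights mu) y ->
        [/\ @Cc_set Y (f y), (forall z, 0 <= f y z <= 1),
            closure (supp (f y)) `<=` V y,
            [/\ V y y, open (V y), compact (closure (V y)) &
                 homeo_chart rho (V y)] & 0 < f y y]),
      0 < eps,
      (forall y, supp (rl_weights mu) y -> eps < rl_weights mu y * f y y) &
      W = [set nu : realization Delta | forall y, supp (rl_weights mu) y ->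
             `|pairing (rl_weights nu) (f y) - pairing (rl_weights mu) (f y)| < eps]].

End XSimplicial.

(* Everything rests on the superlevel sets {nu | d <= nu(f)}, f in C_c(Y),
   d > 0, which are closed and, under (H1) and (H2), compact.  Each atom of
   such a nu spans a simplex with an atom where f does not vanish, so by (H1)
   all atoms lie in a fixed compact set.  Listing the at most N atoms of each
   nu with their weights in [0, 1], an ultrafilter on the superlevel set makes
   atoms and weights converge; by (H2) the limit atoms span a simplex, and the
   measure they carry is the weak-* limit.  Every W in S(mu) lies in a
   superlevel set of the f_i at one atom of mu, and a bump function at an atom
   of mu gives a superlevel set that is a neighbourhood of mu. *)

From HB Require Import structures.
From mathcomp Require Import all_boot all_order all_algebra.
From mathcomp Require Import all_classical all_reals all_analysis.
Import Order.TTheory GRing.Theory Num.Theory.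
Import numFieldNormedType.Exports.
Local Open Scope classical_set_scope.
Local Open Scope ring_scope.

Section FinitelySupportedWeights.
Context {R : realType} {Y : choiceType}.
Implicit Types (m g : Y -> R).

Lemma pairing_indexed n m (p : 'I_n -> Y) (w : 'I_n -> R) g :
  (forall y, m y = \sum_(i < n | p i == y) w i) ->
  pairing m g = \sum_(i < n) w i * g (p i).
Proof.
move=> mE; set r := undup [seq p i | i <- enum 'I_n].
have p_r i : p i \in r by rewrite mem_undup; apply/mapP; exists i; rewrite ?mem_enum.
rewrite /pairing (fsbig_fwiden r) ?undup_uniq //; last first.
- move=> y [_]; rewrite /supp /= => /negP; rewrite negbK => /eqP ->.
  by rewrite mul0r.
- move=> y; rewrite /supp /= => my; apply: contraPP my => yr.
  rewrite mE big_pred0 ?eqxx // => i; apply/negP => /eqP py.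
  by apply: yr; rewrite -py.
under eq_bigr => y _ do rewrite mE big_distrl big_mkcond /=.
rewrite exchange_big /=; apply: eq_bigr => i _.
rewrite -big_mkcond /= -big_filter (eq_filter (a2 := pred1 (p i))).
  by rewrite filter_pred1_uniq ?undup_uniq ?big_seq1.
by move=> y; rewrite /= eq_sym.
Qed.

Lemma pairing1 m : pairing m (fun=> 1) = \sum_(y \in supp m) m y.
Proof. by apply: eq_fsbigr => y _; rewrite mulr1. Qed.

Lemma pairing_ge_weight m g y :
  finite_set (supp m) -> (forall z, 0 <= m z) -> (forall z, 0 <= g z) ->
  supp m y -> m y * g y <= pairing m g.
Proof.
move=> fin m0 g0 my; rewrite /pairing (fsbigD1 y) //= lerDl.
by apply: fsumr_ge0 => z _; exact: mulr_ge0.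
Qed.

Lemma finite_supp_indexed n m :
  finite_set (supp m) -> supp m !=set0 -> card_le (supp m) `I_n ->
  exists (p : 'I_n -> Y) (w : 'I_n -> R),
    [/\ range p = supp m, forall i, w i = 0 \/ w i = m (p i)
      & forall y, m y = \sum_(i < n | p i == y) w i].
Proof.
move=> fin [y0 my0] /geq_card_fset_set size_s.
set s := finmap.enum_fset _ in size_s.
have s_supp y : (y \in s) = (m y != 0).
  by rewrite (in_fset_set fin); apply/idP/idP; rewrite in_setE.
pose p (i : 'I_n) := nth y0 s i.
pose w (i : 'I_n) := if (i < size s)%N then m (p i) else 0.
have p_supp i : supp m (p i).
  rewrite /p; case: (ltnP i (size s)) => [/(mem_nth y0)|/(nth_default y0) ->//].
  by rewrite s_supp.
exists p, w; split.
- apply/seteqP; split=> [_ [i _ <-]//|y my].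
  have ys : y \in s by rewrite s_supp.
  have iy : (index y s < n)%N by rewrite (leq_trans _ size_s) ?index_mem.
  by exists (Ordinal iy); rewrite // /p nth_index.
- by move=> i; rewrite /w; case: ifP; [right|left].
move=> y.
rewrite (bigID (fun i : 'I_n => i < size s)%N) /= [X in _ + X]big1 ?addr0; last first.
  by move=> i /andP[_]; rewrite /w => /negbTE ->.
under eq_bigr => i /andP[_ i_s] do rewrite /w i_s.
rewrite -(big_ord_widen_cond n (fun i => nth y0 s i == y) (fun i => m (nth y0 s i))) //.
rewrite -(big_mkord (fun i => nth y0 s i == y) (fun i => m (nth y0 s i))).
rewrite -(big_nth y0 (fun z => z == y)).
have [ys|yNs] := boolP (y \in s).
  by rewrite -big_filter filter_pred1_uniq ?big_seq1 //; exact: finmap.fset_uniq.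
rewrite big1_seq => [|z /andP[/eqP -> ys]]; last by rewrite ys in yNs.
by apply/eqP; rewrite s_supp negbK in yNs.
Qed.

End FinitelySupportedWeights.

Lemma cvg_initial {S : choiceType} {U : topologicalType} (h : S -> U)
    (F : set_system (initial_topology h)) (s : initial_topology h) :
  Filter F -> h @ F --> h s -> F --> s.
Proof.
move=> FF hF A; rewrite nbhsE => -[B [[C oC CB] Bs] BA].
apply: filterS BA _; rewrite -CB; apply: hF; apply: open_nbhs_nbhs.
by split; rewrite // -[C (h s)]/((h @^-1` C) s) CB.
Qed.

Lemma ultra_cvg_compact {S : Type} {V : topologicalType} {F : set_system S}
    {g : S -> V} {C : set V} :
  UltraFilter F -> compact C -> F (g @^-1` C) -> exists2 q, C q & g @ F --> q.
Proof.
move=> UF cC FC; have PF : ProperFilter F by exact: ultra_proper.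
have [q [Cq clq]] := cC (g @ F) (fmap_proper_filter g PF) FC.
exists q => // U nU; have [//|FnU] := in_ultra_setVsetC (g @^-1` U) UF.
by have [z []] := clq (~` U) U FnU nU.
Qed.

Lemma subclosed_compact_closure {T : topologicalType} {A B : set T} :
  compact B -> closed B -> A `<=` B -> compact (closure A).
Proof.
move=> cB clB AB; apply: (subclosed_compact _ cB); first exact: closed_closure.
by rewrite [X in _ `<=` X](closure_id B).1 //; exact: closure_subset.
Qed.

Lemma hyp_H2_cvg {Y : topologicalType} {Delta : set (set Y)} {S : Type}
    {F : set_system S} {k} {ys : 'I_k.+1 -> S -> Y} {lim : 'I_k.+1 -> Y} :
  hyp_H2 Delta -> ProperFilter F -> (forall i, ys i @ F --> lim i) ->
  (forall s, Delta (range (fun i => ys i s))) -> Delta (range lim).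
Proof.
move=> H2 PF ys_lim Dys.
(* The net is indexed by the pairs (A, s) with A in F and s in A, directed by
   reverse inclusion of A. *)
pose L := {As : set S * S | F As.1 /\ As.1 As.2}.
pose le (u v : L) := (sval v).1 `<=` (sval u).1.
apply: (H2 L le k (fun i l => ys i (sval l).2)) => //.
- split.
  + have [s _] := filter_ex (@filterT _ F _).
    by constructor; exists (setT, s); split; [exact: filterT|].
  + by move=> u; rewrite /le.
  + by move=> u v w uv vw; exact: subset_trans vw uv.
  + move=> [[A a] [FA Aa]] [[B b] [FB Bb]].
    have FAB : F (A `&` B) by exact: filterI.
    have [c ABc] := filter_ex FAB.
    by exists (exist _ (A `&` B, c) (conj FAB ABc)); split=> z [].
- move=> i U nU; have FU : F (ys i @^-1` U) := ys_lim i U nU.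
  have [s Us] := filter_ex FU.
  by exists (exist _ (_, s) (conj FU Us)) => l /(_ _ (proj2 (svalP l))).
Qed.

Lemma cvg_weighted_sum {R : realType} {Y : topologicalType} {S : Type}
    {F : set_system S} {k} {w : 'I_k -> S -> R} {p : 'I_k -> S -> Y}
    {a : 'I_k -> R} {q : 'I_k -> Y} {g : Y -> R} :
  Filter F -> continuous (g : Y -> R^o) ->
  (forall i, w i @ F --> a i) -> (forall i, p i @ F --> q i) ->
  (fun s => \sum_(i < k) w i s * g (p i s) : R^o) @ F -->
    (\sum_(i < k) a i * g (q i) : R^o).
Proof.
move=> FF g_cont w_cvg p_cvg.
apply: (@cvg_big R^o _ +%R 0 xpredT); first exact: add_continuous.
move=> i _; apply: cvgM; first exact: w_cvg.
exact: continuous_cvg (g_cont _) (p_cvg i).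
Qed.

Lemma Cc_bump {R : realType} {Y : topologicalType} :
  hausdorff_space Y -> locally_compact [set: Y] ->
  forall y : Y, exists g : Y -> R, [/\ Cc_set g, forall z, 0 <= g z & 0 < g y].
Proof.
move=> Y_sep Y_lc y.
have [U yU [U_compact U_closed]] := Y_lc y I; rewrite withinET in yU.
have Y_creg := @locally_compact_completely_regular Y R Y_lc Y_sep.
have B_closed : closed (~` U°) := open_closedC (open_interior U).
have yNB : ~ (~` U°) y by move=> /(_ yU).
have [f [f_cont f01 f0 f1]] := (@uniform_separatorP Y R [set y] (~` U°)).1
  (Y_creg y _ B_closed yNB).
have f_le1 z : f z <= 1.
  by have := f01 (f z) (ex_intro2 _ _ z I erefl); rewrite /= in_itv /= => /andP[].
exists (fun z => 1 - f z); split.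
- split; first by move=> z; apply: cvgB; [exact: cvg_cst | exact: f_cont].
  apply: (subclosed_compact_closure U_compact) => // z gz; apply: contrapT => NUz.
  have fz1 : f z = 1 by apply: f1; exists z => // /interior_subset.
  by move: gz; rewrite /supp /= fz1 subrr eqxx.
- by move=> z; rewrite subr_ge0.
- have -> : f y = 0 by apply: f0; exists y.
  by rewrite subr0 ltr01.
Qed.

Section Realization.
Context {R : realType} {Y : topologicalType} (Delta : set (set Y)) (N : nat).
Hypothesis Delta_fin : forall s, Delta s -> finite_set s /\ s !=set0.
Hypothesis Delta_card : forall s, Delta s -> card_le s `I_N.
Hypothesis Delta_sub : forall s t, Delta s -> t `<=` s -> t !=set0 -> Delta t.
Local Notation T := (@realization R Y Delta).

Lemma rl_weightsP (nu : T) : is_simplex_pt Delta (rl_weights nu).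
Proof. exact: (set_valP (nu : simplex_pts Delta)). Qed.

Lemma rl_supp_fin (nu : T) : finite_set (supp (rl_weights nu)).
Proof. by have [/Delta_fin[]] := rl_weightsP nu. Qed.

Lemma rl_supp_neq0 (nu : T) : supp (rl_weights nu) !=set0.
Proof. by have [/Delta_fin[]] := rl_weightsP nu. Qed.

Definition rl_pairing (f : Y -> R) (nu : T) : R^o := pairing (rl_weights nu) f.

(* Indexed by 'I_N.+1 rather than 'I_N because (H2) is stated for 'I_k.+1. *)
Lemma rl_pairing_indexed (nu : T) :
  exists (p : 'I_N.+1 -> Y) (w : 'I_N.+1 -> R),
    [/\ range p = supp (rl_weights nu), forall i, 0 <= w i <= 1,
        \sum_(i < N.+1) w i = 1
      & forall g, rl_pairing g nu = \sum_(i < N.+1) w i * g (p i)].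
Proof.
have [Ds m_ge0 m_sum1] := rl_weightsP nu.
have card_N1 : card_le (supp (rl_weights nu)) `I_N.+1.
  by rewrite (card_le_trans (Delta_card _ Ds)) // card_le_II.
have [p [w [p_supp w_m m_idx]]] :=
  finite_supp_indexed _ _ (rl_supp_fin nu) (rl_supp_neq0 nu) card_N1.
have pairingE g : rl_pairing g nu = \sum_(i < N.+1) w i * g (p i).
  exact: pairing_indexed.
have w_ge0 i : 0 <= w i by case: (w_m i) => ->.
have w_sum1 : \sum_(i < N.+1) w i = 1.
  have := pairingE (fun=> 1); rewrite /rl_pairing pairing1 m_sum1 => ->.
  by apply: eq_bigr => i _; rewrite mulr1.
exists p, w; split=> // i; rewrite w_ge0 -w_sum1 (bigD1 i) //= lerDl.
exact: sumr_ge0.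
Qed.

Lemma indexed_simplex_pt {k} {q : 'I_k -> Y} {a : 'I_k -> R} :
  Delta (range q) -> (forall i, 0 <= a i) -> \sum_(i < k) a i = 1 ->
  is_simplex_pt Delta (fun y => \sum_(i < k | q i == y) a i).
Proof.
move=> Dq a_ge0 a_sum1; set m := fun y => _.
have pairing_m g : pairing m g = \sum_(i < k) a i * g (q i).
  exact: pairing_indexed.
have sum_m : \sum_(y \in supp m) m y = 1.
  rewrite -pairing1 pairing_m -[RHS]a_sum1.
  by apply: eq_bigr => i _; rewrite mulr1.
split=> //; last by move=> y; exact: sumr_ge0.
apply: Delta_sub Dq _ _.
- move=> y my; apply: contrapT => yNq; move: my; rewrite /supp /= /m big_pred0 ?eqxx //.
  by move=> i; apply/negbTE/eqP => qy; apply: yNq; exists i.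
- apply/set0P; apply: contraTneq isT => m0.
  by move: sum_m; rewrite m0 fsbig_set0 => /eqP; rewrite eq_sym oner_eq0.
Qed.

Lemma rl_pairing_continuous (f : Cc Y) : continuous (rl_pairing (val f)).
Proof.
move=> nu; exact: (continuous_comp (@initial_continuous _ _ (@eval_map R Y Delta) nu)
  (@proj_continuous (Cc Y) (fun _ => R^o) f (eval_map nu))).
Qed.

Lemma realization_cvg (F : set_system T) (nu : T) : Filter F ->
  (forall f : Cc Y, rl_pairing (val f) @ F --> rl_pairing (val f) nu) -> F --> nu.
Proof.
move=> FF pairing_cvg; apply: cvg_initial; apply/cvg_sup => f.
by apply: cvg_initial; exact: pairing_cvg.
Qed.

Definition superlevel (f : Cc Y) (d : R) : set T :=
  [set nu | d <= rl_pairing (val f) nu].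

Lemma superlevel_closed (f : Cc Y) d : closed (superlevel f d).
Proof.
apply: (@preimage_closed _ _ (rl_pairing (val f)) [set x | d <= x]).
  by move=> nu _; exact: rl_pairing_continuous.
exact: closed_ge.
Qed.

Lemma superlevel_supp {f : Cc Y} {d nu} : 0 < d -> superlevel f d nu ->
  supp (rl_weights nu) `<=`
    [set y | exists2 y', closure (supp (val f)) y' & Delta ([set y] `|` [set y'])].
Proof.
move=> d_gt0 d_le y my.
have [y' my' fy'] : exists2 y', supp (rl_weights nu) y' & val f y' != 0.
  apply: contrapT => /forall2NP all0; move: d_le; rewrite /superlevel /=.
  rewrite /rl_pairing /pairing fsbig1 ?leNgt ?d_gt0 // => z mz.
  by have [//|/negP] := all0 z; rewrite negbK => /eqP ->; rewrite mulr0.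
exists y'; first exact: subset_closure.
have [Dnu _ _] := rl_weightsP nu.
by apply: Delta_sub Dnu _ _; [move=> z [->|->]|exists y; left].
Qed.

Lemma S_nbhd_sub_superlevel {X : topologicalType} {rho : Y -> X} {mu W} :
  S_nbhd rho mu W -> exists (f : Cc Y) d, 0 < d /\ W `<=` superlevel f d.
Proof.
move=> [f [V [eps [f_prop _ eps_lt ->]]]].
have [y my] := rl_supp_neq0 mu.
have [f_Cc f01 _ _ _] := f_prop y my.
have [_ m_ge0 _] := rl_weightsP mu.
have weight_le : rl_weights mu y * f y y <= rl_pairing (f y) mu.
  apply: pairing_ge_weight => //; first exact: rl_supp_fin.
  by move=> z; have /andP[] := f01 z.
exists (exist _ (f y) (mem_set f_Cc)), (rl_pairing (f y) mu - eps); split.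
  by rewrite subr_gt0 (lt_le_trans (eps_lt y my)).
move=> nu /(_ y my) /ltr_normlP[+ _]; rewrite /superlevel /=.
by rewrite opprB ltrBlDr -ltrBlDl => /ltW.
Qed.

Lemma superlevel_nbhs (mu : T) :
  hausdorff_space Y -> locally_compact [set: Y] ->
  exists (f : Cc Y) d, 0 < d /\ nbhs mu (superlevel f d).
Proof.
move=> Y_sep Y_lc; have [y my] := rl_supp_neq0 mu.
have [g [g_Cc g_ge0 gy_gt0]] := Cc_bump Y_sep Y_lc y (R := R).
have [_ m_ge0 _] := rl_weightsP mu.
have weight_le : rl_weights mu y * g y <= rl_pairing g mu.
  by apply: pairing_ge_weight => //; exact: rl_supp_fin.
have c_gt0 : 0 < rl_weights mu y * g y by rewrite mulr_gt0 // lt0r my m_ge0.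
pose c := rl_weights mu y * g y / 2.
exists (exist _ g (mem_set g_Cc)), c; split; first by rewrite divr_gt0.
apply: (@filterS _ _ _ [set nu | c < rl_pairing g nu]); first by move=> nu /ltW.
apply: open_nbhs_nbhs; split.
  apply: (@open_comp _ _ (rl_pairing g) [set x | c < x]); last exact: open_gt.
  by move=> nu _; exact: (rl_pairing_continuous (exist _ g (mem_set g_Cc))).
by rewrite /= (lt_le_trans _ weight_le) // ltr_pdivrMr // ltr_pMr // ltr1n.
Qed.

Hypothesis H1 : hyp_H1 Delta.
Hypothesis H2 : hyp_H2 Delta.

Lemma ultra_cvg_supp_compact {F : set_system T} {C : set Y} :
  UltraFilter F -> compact C ->
  F [set nu | supp (rl_weights nu) `<=` C] -> exists nu_lim : T, F --> nu_lim.
Proof.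
move=> UF C_compact FC; have PF : ProperFilter F by exact: ultra_proper.
have /choice[pw pwP] : forall nu : T,
    exists pw : ('I_N.+1 -> Y) * ('I_N.+1 -> R),
    [/\ range pw.1 = supp (rl_weights nu), forall i, 0 <= pw.2 i <= 1,
        \sum_(i < N.+1) pw.2 i = 1
      & forall g, rl_pairing g nu = \sum_(i < N.+1) pw.2 i * g (pw.1 i)].
  by move=> nu; have [p [w ?]] := rl_pairing_indexed nu; exists (p, w).
pose p i nu := (pw nu).1 i; pose w i nu := (pw nu).2 i.
have /choice[q q_cvg] : forall i, exists q : Y, p i @ F --> q.
  move=> i; have Fp : F (p i @^-1` C).
    by apply: filterS FC => nu; apply; have [<- _ _ _] := pwP nu; exists i.
  by have [q _ ?] := ultra_cvg_compact UF C_compact Fp; exists q.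
have /choice[a aP] : forall i, exists a : R, 0 <= a /\ w i @ F --> a.
  move=> i; have Fw : F (w i @^-1` `[0, 1]%classic).
    by apply: filterE => nu; have [_ /(_ i) ? _ _] := pwP nu; rewrite /= in_itv.
  have [a + ?] := ultra_cvg_compact UF (@segment_compact R 0 1) Fw.
  by rewrite /= in_itv => /andP[a_ge0 _]; exists a.
have pairing_cvg g : continuous (g : Y -> R^o) ->
    rl_pairing g @ F --> (\sum_(i < N.+1) a i * g (q i) : R^o).
  move=> g_cont; have -> : rl_pairing g = fun nu => (\sum_i w i nu * g (p i nu) : R^o).
    by apply: funext => nu; have [_ _ _ ->] := pwP nu.
  exact: (cvg_weighted_sum _ g_cont (fun i => (aP i).2) q_cvg).
have a_sum1 : \sum_(i < N.+1) a i = 1.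
  have rl_pairing1 : rl_pairing (fun=> 1) = fun=> 1.
    apply: funext => nu; have [_ _ w_sum1 ->] := pwP nu.
    by rewrite -[RHS]w_sum1; apply: eq_bigr => i _; rewrite mulr1.
  have := pairing_cvg _ (@cst_continuous Y R^o 1); rewrite rl_pairing1.
  move=> /(cvg_unique (@norm_hausdorff _ R^o) (cvg_cst (1 : R^o))) ->.
  by apply: eq_bigr => i _; rewrite mulr1.
have Dq : Delta (range q).
  apply: (hyp_H2_cvg H2 PF q_cvg) => nu.
  by have [-> _ _ _] := pwP nu; have [] := rl_weightsP nu.
pose m_lim y := \sum_(i < N.+1 | q i == y) a i.
have m_limP : is_simplex_pt Delta m_lim.
  exact: indexed_simplex_pt Dq (fun i => (aP i).1) a_sum1.
exists (exist _ m_lim (mem_set m_limP) : simplex_pts Delta).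
apply: realization_cvg => g; rewrite /rl_pairing /= (pairing_indexed _ _ q a) //.
exact/pairing_cvg/(proj1 (set_valP g)).
Qed.

Lemma superlevel_compact (f : Cc Y) d : 0 < d -> compact (superlevel f d).
Proof.
move=> d_gt0; rewrite compact_ultra => F UF Fsup.
have C_compact := H1 _ (proj2 (set_valP f)).
have [nu_lim F_nu_lim] := ultra_cvg_supp_compact UF C_compact
  (filterS (fun nu => superlevel_supp d_gt0) Fsup).
exists nu_lim; split=> //.
exact: (closed_cvg _ (superlevel_closed f d) Fsup _ F_nu_lim).
Qed.

End Realization.

Theorem proposition3p19 (R : realType) (X Y : topologicalType) (rho : Y -> X)
    (Delta : set (set Y)) :
  hausdorff_space X -> locally_compact [set: X] ->
  hausdorff_space Y -> locally_compact [set: Y] ->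
  local_homeomorphism rho ->
  X_simplicial_complex rho Delta ->
  hyp_H1 Delta -> hyp_H2 Delta ->
  (forall (mu : @realization R Y Delta) (W : set (@realization R Y Delta)),
      S_nbhd rho mu W -> compact (closure W)) /\
  locally_compact [set: @realization R Y Delta].
Proof.
move=> _ _ Y_sep Y_lc _ [Delta_fin [N Delta_card] _ Delta_sub] H1 H2.
have superlevelP f (d : R) : 0 < d ->
    compact (superlevel Delta f d) /\ closed (superlevel Delta f d).
  move=> d_gt0; split; last exact: superlevel_closed.
  exact: (superlevel_compact _ _ Delta_fin Delta_card Delta_sub H1 H2).
split.
- move=> mu W muW.
  have [f [d [d_gt0 W_sub]]] := S_nbhd_sub_superlevel _ Delta_fin muW.
  have [? ?] := superlevelP f d d_gt0.
  exact: subclosed_compact_closure W_sub.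
- move=> mu _; rewrite withinET.
  have [f [d [/superlevelP ? ?]]] := superlevel_nbhs _ Delta_fin mu Y_sep Y_lc.
  by exists (superlevel Delta f d).
Qed.
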